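(* Let $\mathcal F_2$ be the set consisting of the following five graphs: the path $P_4$ on four vertices; $K_5\setminus S_2$ (the complete graph on 5 vertices with the two edges of a path $uvw$ removed, i.e. one vertex non-adjacent to exactly two others); $K_6\setminus M_2$ (the complete graph on 6 vertices with two disjoint edges removed); the graph on vertices $1,\dots,5$ with edges $24,34,23,14,45$ (a triangle with two pendant vertices attached to the same vertex of the triangle); and the graph on vertices $1,\dots,5$ with edges $12,14,23,24,34,45$ (the diamond $K_4$ minus the edge $13$, together with a pendant vertex $5$ attached to the degree-3 vertex $4$). Then $\mathcal F_2\subseteq {\bf Forb}(\Gamma_{\le 2})$.
   Context: For a finite graph $G$ and indeterminates $X_G=\{x_u : u\in V(G)\}$, the generalized Laplacian matrix $L(G,X_G)$ is the $V(G)\times V(G)$ matrix over $\mathbb{Z}[X_G]$ with $(u,u)$-entry $x_u$ and $(u,v)$-entry $-m_{uv}$ for $u\ne v$, $m_{uv}$ being the number of edges between $u$ and $v$. The $i$-th critical ideal $I_i(G,X_G)$ is the ideal of $\mathbb{Z}[X_G]$ generated by all $i\times i$ minors of $L(G,X_G)$ (with $I_i=\langle1\rangle$ for $i<1$, $I_i=\langle 0\rangle$ for $i>|V(G)|$). The algebraic co-rank $\gamma(G)$ is the number of critical ideals of $G$ equal to $\langle 1\rangle$. $\Gamma_{\le k}$ is the set of simple connected graphs $G$ with $\gamma(G)\le k$. ${\bf Forb}(\Gamma_{\le k})$ is the set of minimal (with respect to induced subgraphs) simple connected graphs $G$ with $\gamma(G)\ge k+1$; equivalently, the simple connected graphs $G$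 with $\gamma(G)=k+1$ such that $\gamma(G\setminus v)<\gamma(G)$ for every vertex $v$. *)

From HB Require Import structures.
From mathcomp Require Import all_boot all_order all_algebra.
From mathcomp Require Import mpoly.
From Stdlib Require Import ClassicalEpsilon.

Set Implicit Arguments.
Unset Strict Implicit.
Unset Printing Implicit Defensive.

Import GRing.Theory.
Local Open Scope ring_scope.

Definition simple_graph (n : nat) (e : rel 'I_n) : Prop :=
  (forall u v, e u v = e v u) /\ (forall u, e u u = false).

Definition connected_graph (n : nat) (e : rel 'I_n) : Prop :=
  forall u v, connect e u v.

Definition gen_laplacian (n : nat) (e : rel 'I_n) : 'M[{mpoly int[n]}]_n :=
  \matrix_(u, v) (if u == v then 'X_u else - ((e u v : nat)%:R)).

Definition is_minor (n i : nat) (L : 'M[{mpoly int[n]}]_n) (p : {mpoly int[n]}) : Prop :=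
  exists (f g : 'I_i -> 'I_n), injective f /\ injective g /\
    p = \det (\matrix_(a, b) L (f a) (g b)).

(* The i-th critical ideal I_i(G, X_G) (ideal of Z[X_G] generated by the
   i x i minors) is the unit ideal <1>, i.e. 1 is a Z[X_G]-linear combination
   of finitely many i x i minors. For i = 0 this holds (det of the empty
   matrix is 1); for i > n there are no minors, so the ideal is <0>. *)
Definition critical_ideal_trivial (n : nat) (e : rel 'I_n) (i : nat) : Prop :=
  exists (m : nat) (c p : 'I_m -> {mpoly int[n]}),
    (forall j, is_minor i (gen_laplacian e) (p j)) /\
    \sum_(j < m) c j * p j = 1.

Definition pbool (P : Prop) : bool :=
  if excluded_middle_informative P then true else false.

Definition gamma (n : nat) (e : rel 'I_n) : nat :=
  (\sum_(1 <= i < n.+1) pbool (critical_ideal_trivial e i))%N.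

Definition del_vertex (n : nat) (e : rel 'I_n.+1) (v : 'I_n.+1) : rel 'I_n :=
  fun a b => e (lift v a) (lift v b).

Definition in_Forb (k n : nat) (e : rel 'I_n.+1) : Prop :=
  [/\ simple_graph e, connected_graph e, gamma e = k.+1 &
      forall v, (gamma (del_vertex e v) < gamma e)%N].

Definition graph_of_edges (n : nat) (E : seq (nat * nat)) : rel 'I_n :=
  fun u v => ((nat_of_ord u, nat_of_ord v) \in E) || ((nat_of_ord v, nat_of_ord u) \in E).

Definition complete_minus (n : nat) (E : seq (nat * nat)) : rel 'I_n :=
  fun u v => (u != v) && ~~ @graph_of_edges n E u v.

Definition P4 : rel 'I_4 := @graph_of_edges 4 [:: (0,1); (1,2); (2,3)]%N.
Definition K5_minus_S2 : rel 'I_5 := @complete_minus 5 [:: (0,1); (1,2)]%N.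
Definition K6_minus_M2 : rel 'I_6 := @complete_minus 6 [:: (0,1); (2,3)]%N.
(* vertices 1..5, edges 24,34,23,14,45 (shifted to 0..4) *)
Definition G4 : rel 'I_5 := @graph_of_edges 5 [:: (1,3); (2,3); (1,2); (0,3); (3,4)]%N.
(* vertices 1..5, edges 12,14,23,24,34,45 (shifted to 0..4) *)
Definition G5 : rel 'I_5 := @graph_of_edges 5 [:: (0,1); (0,3); (1,2); (1,3); (2,3); (3,4)]%N.

(* A critical ideal is the unit ideal as soon as one of its generating minors
   is a unit of Z[X_G]; for I_1, I_2 and most I_3 we exhibit a submatrix of
   L(G, X_G) that is lower triangular with -1 on the diagonal, and in the two
   dense graphs a 3 x 3 minor equal to -1.  Conversely I_i is proper as soon
   as all i x i minors vanish at one integer point x, since I_i then lies in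
   the kernel of evaluation at x; this happens when L(G, x) = B C factors
   through Z^k with k < i.  Such factorizations with k = 3 for G, and with
   k = 2 for every G \ v, give gamma(G) = 3 and gamma(G \ v) <= 2. *)

From mathcomp Require Import all_boot all_order all_algebra.
From mathcomp Require Import mpoly.
From mathcomp Require Import ring.
From Stdlib Require Import ClassicalEpsilon.
Set Implicit Arguments.
Unset Strict Implicit.
Unset Printing Implicit Defensive.
Import GRing.Theory.
Local Open Scope ring_scope.

Lemma pboolT (P : Prop) : P -> pbool P = true.
Proof. by rewrite /pbool; case: excluded_middle_informative. Qed.

Lemma pboolF (P : Prop) : ~ P -> pbool P = false.
Proof. by rewrite /pbool; case: excluded_middle_informative. Qed.

Section Gamma.

Variables (n : nat) (e : rel 'I_n).

Lemma gamma_le k :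
  (forall i, (k < i)%N -> ~ critical_ideal_trivial e i) -> (gamma e <= k)%N.
Proof.
move=> ntriv; have sum_le m : (\sum_(1 <= i < m.+1) pbool (critical_ideal_trivial e i) <= m)%N.
  apply: (@leq_trans (\sum_(1 <= i < m.+1) 1)); first by apply: leq_sum => i _; apply: leq_b1.
  by rewrite sum_nat_const_nat subn1 muln1.
rewrite /gamma; have [nk|kn] := leqP n k; first exact: leq_trans (sum_le n) nk.
rewrite (big_cat_nat _ (n := k.+1)) //= ?ltnS ?(ltnW kn) //.
rewrite [\sum_(k.+1 <= i < n.+1) _]big1_seq ?addn0 ?sum_le // => i /andP[_].
by rewrite mem_index_iota => /andP[ki _]; rewrite pboolF //; apply: ntriv.
Qed.

Lemma gamma_eq k : (k <= n)%N ->
  (forall i, (0 < i <= k)%N -> critical_ideal_trivial e i) ->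
  (forall i, (k < i)%N -> ~ critical_ideal_trivial e i) -> gamma e = k.
Proof.
move=> kn triv ntriv; apply/eqP; rewrite eqn_leq gamma_le //=.
rewrite /gamma (big_cat_nat _ (n := k.+1)) //= ?ltnS //.
rewrite (eq_big_nat _ _ (F2 := fun=> 1%N)) => [|i /andP[i0 ik]]; last first.
  by rewrite pboolT //; apply: triv; rewrite i0 -ltnS.
by rewrite sum_nat_const_nat subn1 muln1 leq_addr.
Qed.

End Gamma.

Lemma in_Forb_of_gamma k n (e : rel 'I_n.+1) :
  simple_graph e -> connected_graph e -> gamma e = k.+1 ->
  (forall v, (gamma (del_vertex e v) <= k)%N) -> in_Forb k e.
Proof. by move=> simple_e conn_e gamma_e del_le; split=> // v; rewrite gamma_e ltnS. Qed.

Lemma det_mulmx_ltn (F : fieldType) i k (X : 'M[F]_(i, k)) (Y : 'M_(k, i)) :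
  (k < i)%N -> \det (X *m Y) = 0.
Proof.
move=> lt_ki; apply/eqP; apply: contraTT lt_ki => /negbTE detXY.
have : row_free (X *m Y) by rewrite row_free_unit unitmxE unitfE detXY.
rewrite /row_free => /eqP rank_XY; rewrite -leqNgt -[X in (X <= _)%N]rank_XY.
exact: leq_trans (mxrankM_maxl _ _) (rank_leq_col _).
Qed.

Lemma det_mulmx_ltn_int i k (X : 'M[int]_(i, k)) (Y : 'M_(k, i)) :
  (k < i)%N -> \det (X *m Y) = 0.
Proof.
move=> /(det_mulmx_ltn (map_mx (intr : int -> rat) X) (map_mx intr Y)).
by rewrite -map_mxM det_map_mx => /eqP; rewrite intr_eq0 => /eqP.
Qed.

Section CriticalIdeals.

Variables (m : nat) (e : rel 'I_m).

Local Notation L := (gen_laplacian e).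

Lemma is_minor_nth i (x0 : 'I_m) (rs cs : seq 'I_m) :
  size rs = i -> size cs = i -> uniq rs -> uniq cs ->
  is_minor i L (\det (\matrix_(a < i, b < i) L (nth x0 rs a) (nth x0 cs b))).
Proof.
move=> size_rs size_cs /(uniqP x0) inj_rs /(uniqP x0) inj_cs.
exists (fun a => nth x0 rs a), (fun b => nth x0 cs b); split; last split => //.
- by move=> a b /inj_rs eq_ab; apply/val_inj/eq_ab; rewrite inE size_rs.
- by move=> a b /inj_cs eq_ab; apply/val_inj/eq_ab; rewrite inE size_cs.
Qed.

Lemma critical_ideal_trivial_of_minor i (c p : {mpoly int[m]}) :
  is_minor i L p -> c * p = 1 -> critical_ideal_trivial e i.
Proof. by move=> p_minor cp1; exists 1%N, (fun=> c), (fun=> p); rewrite big_ord1. Qed.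

(* The submatrix on rows [rs] and columns [cs] is lower triangular with -1 on
   its diagonal, hence its determinant is a unit. *)
Lemma critical_ideal_trivial_of_trig i (x0 : 'I_m) (rs cs : seq 'I_m) :
  size rs = i -> size cs = i -> uniq rs -> uniq cs ->
  all (fun a => all (fun b => (b < a)%N ||
         (nth x0 rs a != nth x0 cs b) && (e (nth x0 rs a) (nth x0 cs b) == (a == b)))
       (iota 0 i)) (iota 0 i) ->
  critical_ideal_trivial e i.
Proof.
move=> size_rs size_cs uniq_rs uniq_cs /allP trig.
set M := \matrix_(a < i, b < i) L (nth x0 rs a) (nth x0 cs b).
have M_upper (a b : 'I_i) : (a <= b)%N -> M a b = - (a == b)%:R.
  have in_iota (c : 'I_i) : val c \in iota 0 i by rewrite mem_iota add0n ltn_ord.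
  move=> le_ab; have /allP/(_ _ (in_iota b)) := trig _ (in_iota a).
  by rewrite ltnNge le_ab /= /M !mxE => /andP[/negbTE-> /eqP->].
have M_trig : is_trig_mx M.
  apply/is_trig_mxP => a b lt_ab.
  by rewrite (M_upper _ _ (ltnW lt_ab)) -val_eqE (ltn_eqF lt_ab) oppr0.
apply: (critical_ideal_trivial_of_minor (c := (-1) ^+ i)
  (is_minor_nth x0 size_rs size_cs uniq_rs uniq_cs)).
rewrite -/M det_trig // (eq_bigr (fun=> -1)) => [|a _]; last by rewrite M_upper // eqxx.
by rewrite prodr_const card_ord -exprMn mulrNN mulr1 expr1n.
Qed.

Lemma meval_gen_laplacian (x : 'I_m -> int) u v :
  meval x (L u v) = if u == v then x u else - (e u v)%:R.
Proof. by rewrite mxE; case: eqP => [->|_]; rewrite ?mevalXU // mevalN rmorph_nat. Qed.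

Lemma critical_ideal_nontrivial_of_factor i k (x : 'I_m -> int)
    (B : 'M[int]_(m, k)) (C : 'M[int]_(k, m)) :
  (k < i)%N -> map_mx (meval x) L = B *m C -> ~ critical_ideal_trivial e i.
Proof.
move=> lt_ki /matrixP LxBC [r [c [p [p_minor sum_cp]]]].
have p_zero j : meval x (p j) = 0.
  have [f [g [_ [_ ->]]]] := p_minor j; rewrite -det_map_mx.
  rewrite (_ : map_mx _ _ = \matrix_(a, t) B (f a) t *m \matrix_(t, b) C t (g b)).
    exact: det_mulmx_ltn_int.
  apply/matrixP => a b; have := LxBC (f a) (g b); rewrite mxE => LxBC_ab.
  rewrite 2![in LHS]mxE; apply: etrans LxBC_ab _; rewrite !mxE.
  by apply: eq_bigr => t _; rewrite !mxE.
have := congr1 (meval x) sum_cp; rewrite rmorph_sum meval1 big1 => [|j _].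
  by move/eqP; rewrite eq_sym oner_eq0.
by rewrite rmorphM /= p_zero mulr0.
Qed.

End CriticalIdeals.

Lemma det_mx33 (R : comNzRingType) (a : nat -> nat -> R) :
  \det (\matrix_(i < 3, j < 3) a i j) =
    a 0 0 * (a 1 1 * a 2 2 - a 1 2 * a 2 1)
  - a 0 1 * (a 1 0 * a 2 2 - a 1 2 * a 2 0)
  + a 0 2 * (a 1 0 * a 2 1 - a 1 1 * a 2 0).
Proof.
rewrite (expand_det_row _ 0) !big_ord_recr big_ord0 /= /cofactor.
rewrite !(expand_det_row _ 0) !big_ord_recr !big_ord0 /= /cofactor !det_mx11 !mxE /=.
by rewrite !expr0 !expr1; ring.
Qed.

Lemma critical_ideal_trivial_of_minor3 m (e : rel 'I_m) (x0 : 'I_m) (rs cs : seq 'I_m)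
    (c : {mpoly int[m]}) :
  size rs = 3 -> size cs = 3 -> uniq rs -> uniq cs ->
  (let a i j := gen_laplacian e (nth x0 rs i) (nth x0 cs j) in
   c * (a 0 0 * (a 1 1 * a 2 2 - a 1 2 * a 2 1)
      - a 0 1 * (a 1 0 * a 2 2 - a 1 2 * a 2 0)
      + a 0 2 * (a 1 0 * a 2 1 - a 1 1 * a 2 0)) = 1) ->
  critical_ideal_trivial e 3.
Proof.
move=> size_rs size_cs uniq_rs uniq_cs cdet1.
apply: (critical_ideal_trivial_of_minor (c := c) (is_minor_nth e x0 size_rs size_cs uniq_rs uniq_cs)).
by rewrite (det_mx33 (fun i j => gen_laplacian e (nth x0 rs i) (nth x0 cs j))).
Qed.

Lemma connected_of_parent n (e : rel 'I_n) (par : 'I_n -> 'I_n) r :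
  (forall u v, e u v = e v u) -> (forall u, (par u == u) || e u (par u)) ->
  (forall u, iter n par u == r) -> connected_graph e.
Proof.
move=> sym_e to_par to_root.
have connect_par u : connect e u (par u).
  by case/orP: (to_par u) => [/eqP ->|/connect1]; rewrite ?connect0.
have connect_iter u k : connect e u (iter k par u).
  by elim: k => [|k IHk] /=; [exact: connect0 | exact: connect_trans IHk (connect_par _)].
have connect_root u : connect e u r by rewrite -(eqP (to_root u)).
by move=> u v; rewrite (connect_trans (connect_root u)) // (sym_connect_sym sym_e).
Qed.

(* Certificates are checked by [vm_compute], under which [enum], [inord] and
   big operators are stuck; [inZp] and [foldr] reduce. *)
Definition ords {n} (s : seq nat) : seq 'I_n.+1 := [seq inZp k | k <- s].

Definition ord_seq n : seq 'I_n.+1 := ords (iota 0 n.+1).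

Lemma eq_inZp n a b : (a < n.+1)%N -> (b < n.+1)%N ->
  (inZp a == inZp b :> 'I_n.+1) = (a == b).
Proof. by move=> lt_a lt_b; rewrite -val_eqE /= !modn_small. Qed.

Lemma all_ord_seqP n (P : pred 'I_n.+1) : all P (ord_seq n) -> forall u, P u.
Proof.
move=> /allP P_all u; apply: P_all; apply/mapP.
by exists (val u); rewrite ?valZpK // mem_iota add0n ltn_ord.
Qed.

Lemma simple_graph_of_check n (e : rel 'I_n.+1) :
  all (fun u => ~~ e u u && all (fun v => e u v == e v u) (ord_seq n)) (ord_seq n) ->
  simple_graph e.
Proof.
move/all_ord_seqP=> chk; split=> [u v|u].
  by have /andP[_ /all_ord_seqP/(_ v)/eqP] := chk u.
by have /andP[/negbTE] := chk u.
Qed.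

Record laplacian_factorization := LapFactor {
  lf_point : seq int;
  lf_left : seq (seq int);
  lf_right : seq (seq int) }.

Definition seq_mx m k (s : seq (seq int)) : 'M[int]_(m, k) :=
  \matrix_(a, b) nth 0 (nth [::] s a) b.

Definition factors_laplacian n (e : rel 'I_n.+1) k (F : laplacian_factorization) :=
  all (fun u : 'I_n.+1 => all (fun v : 'I_n.+1 =>
    (if u == v then nth 0 (lf_point F) u else - (e u v)%:R) ==
    foldr +%R 0 [seq nth 0 (nth [::] (lf_left F) u) t * nth 0 (nth [::] (lf_right F) t) v
                | t <- iota 0 k]) (ord_seq n)) (ord_seq n).

Lemma critical_ideal_nontrivial_of_factors n (e : rel 'I_n.+1) k F i :
  factors_laplacian e k F -> (k < i)%N -> ~ critical_ideal_trivial e i.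
Proof.
move=> /all_ord_seqP chk lt_ki.
apply: (critical_ideal_nontrivial_of_factor (x := fun u => nth 0 (lf_point F) u)
  (B := seq_mx n.+1 k (lf_left F)) (C := seq_mx k n.+1 (lf_right F)) lt_ki).
apply/matrixP => u v; rewrite mxE meval_gen_laplacian.
have /all_ord_seqP/(_ v)/eqP -> := chk u.
rewrite foldrE big_map -{1}(subn0 k) -/(index_iota 0 k) big_mkord mxE.
by apply: eq_bigr => t _; rewrite !mxE.
Qed.

Lemma gamma_del_vertex_le n (e : rel 'I_n.+2) k (Fs : seq laplacian_factorization) :
  all (fun v => factors_laplacian (del_vertex e v) k (nth (LapFactor [::] [::] [::]) Fs v))
    (ord_seq n.+1) ->
  forall v, (gamma (del_vertex e v) <= k)%N.
Proof.
move/all_ord_seqP=> chk v; apply: gamma_le => i.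
exact: critical_ideal_nontrivial_of_factors (chk v).
Qed.

Lemma P4_in_Forb : in_Forb 2 P4.
Proof.
have is_simple : simple_graph P4 by apply: simple_graph_of_check; vm_compute.
apply: (in_Forb_of_gamma is_simple).
- by apply: (connected_of_parent (proj1 is_simple) (r := ord0)
      (par := fun u => inZp (nth 0 [:: 0; 0; 1; 2] u))); apply: all_ord_seqP; vm_compute.
- apply: gamma_eq => // [[|[|[|[|i]]]] // _ | i lt3i].
  + by apply: (@critical_ideal_trivial_of_trig _ _ 1 ord0
      (ords [:: 0]) (ords [:: 1])); vm_compute.
  + by apply: (@critical_ideal_trivial_of_trig _ _ 2 ord0
      (ords [:: 0; 1]) (ords [:: 1; 2])); vm_compute.
  + by apply: (@critical_ideal_trivial_of_trig _ _ 3 ord0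
      (ords [:: 0; 1; 2]) (ords [:: 1; 2; 3])); vm_compute.
  + apply: (critical_ideal_nontrivial_of_factors (k := 3) _ lt3i
      (F := LapFactor [:: -2; -1; -1; 1]
        [:: [:: 2; 1; 0]; [:: 1; 0; 0]; [:: 0; -1; 1]; [:: 0; 0; -1]]
        [:: [:: -1; -1; -1; 0]; [:: 0; 1; 2; 0]; [:: 0; 0; 1; -1]])).
    by vm_compute.
- apply: (gamma_del_vertex_le (Fs := [::
    LapFactor [:: -2; -1; -2]
      [:: [:: 2; 1]; [:: 1; 0]; [:: 0; -1]]
      [:: [:: -1; -1; -1]; [:: 0; 1; 2]];
    LapFactor [:: -2; -1; -1]
      [:: [:: 1; 0]; [:: 0; 1]; [:: 0; 1]]
      [:: [:: -2; 0; 0]; [:: 0; -1; -1]];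
    LapFactor [:: -2; -2; 0]
      [:: [:: 2; 1]; [:: 1; 0]; [:: 0; 0]]
      [:: [:: -1; -2; 0]; [:: 0; 3; 0]];
    LapFactor [:: -2; -1; -2]
      [:: [:: 2; 1]; [:: 1; 0]; [:: 0; -1]]
      [:: [:: -1; -1; -1]; [:: 0; 1; 2]]])).
  by vm_compute.
Qed.

Lemma K5_minus_S2_in_Forb : in_Forb 2 K5_minus_S2.
Proof.
have is_simple : simple_graph K5_minus_S2 by apply: simple_graph_of_check; vm_compute.
apply: (in_Forb_of_gamma is_simple).
- by apply: (connected_of_parent (proj1 is_simple) (r := ord0)
      (par := fun u => inZp (nth 0 [:: 0; 3; 0; 0; 0] u))); apply: all_ord_seqP; vm_compute.
- apply: gamma_eq => // [[|[|[|[|i]]]] // _ | i lt3i].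
  + by apply: (@critical_ideal_trivial_of_trig _ _ 1 ord0
      (ords [:: 0]) (ords [:: 2])); vm_compute.
  + by apply: (@critical_ideal_trivial_of_trig _ _ 2 ord0
      (ords [:: 0; 3]) (ords [:: 2; 1])); vm_compute.
  + apply: (critical_ideal_trivial_of_minor3 (c := -1) (x0 := ord0)
      (rs := ords [:: 0; 1; 3]) (cs := ords [:: 1; 2; 4])) => //=.
    by rewrite !mxE !eq_inZp //=; ring.
  + apply: (critical_ideal_nontrivial_of_factors (k := 3) _ lt3i
      (F := LapFactor [:: -2; -1; 0; -1; -1]
        [:: [:: 2; 0; 1]; [:: 0; 1; 0]; [:: 1; 0; 0]; [:: 1; 1; 1]; [:: 1; 1; 1]]
        [:: [:: -1; 0; 0; -1; -1]; [:: 0; -1; 0; -1; -1]; [:: 0; 0; -1; 1; 1]])).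
    by vm_compute.
- apply: (gamma_del_vertex_le (Fs := [::
    LapFactor [:: -2; -2; -1; -1]
      [:: [:: 2; -1]; [:: 0; 1]; [:: 1; 0]; [:: 1; 0]]
      [:: [:: -1; -1; -1; -1]; [:: 0; -2; -1; -1]];
    LapFactor [:: -2; -1; -1; -1]
      [:: [:: 2; 1]; [:: 1; 0]; [:: 1; 0]; [:: 1; 0]]
      [:: [:: -1; -1; -1; -1]; [:: 0; 1; 1; 1]];
    LapFactor [:: -2; -2; -1; -1]
      [:: [:: 2; -1]; [:: 0; 1]; [:: 1; 0]; [:: 1; 0]]
      [:: [:: -1; -1; -1; -1]; [:: 0; -2; -1; -1]];
    LapFactor [:: -1; -1; -1; -2]
      [:: [:: 1; 0]; [:: 0; 1]; [:: 1; 0]; [:: 1; 1]]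
      [:: [:: -1; 0; -1; -1]; [:: 0; -1; 0; -1]];
    LapFactor [:: -1; -1; -1; -2]
      [:: [:: 1; 0]; [:: 0; 1]; [:: 1; 0]; [:: 1; 1]]
      [:: [:: -1; 0; -1; -1]; [:: 0; -1; 0; -1]]])).
  by vm_compute.
Qed.

Lemma K6_minus_M2_in_Forb : in_Forb 2 K6_minus_M2.
Proof.
have is_simple : simple_graph K6_minus_M2 by apply: simple_graph_of_check; vm_compute.
apply: (in_Forb_of_gamma is_simple).
- by apply: (connected_of_parent (proj1 is_simple) (r := ord0)
      (par := fun u => inZp (nth 0 [:: 0; 2; 0; 0; 0; 0] u))); apply: all_ord_seqP; vm_compute.
- apply: gamma_eq => // [[|[|[|[|i]]]] // _ | i lt3i].
  + by apply: (@critical_ideal_trivial_of_trig _ _ 1 ord0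
      (ords [:: 0]) (ords [:: 2])); vm_compute.
  + by apply: (@critical_ideal_trivial_of_trig _ _ 2 ord0
      (ords [:: 0; 2]) (ords [:: 2; 1])); vm_compute.
  + apply: (critical_ideal_trivial_of_minor3 (c := -1) (x0 := ord0)
      (rs := ords [:: 0; 2; 4]) (cs := ords [:: 1; 3; 5])) => //=.
    by rewrite !mxE !eq_inZp //=; ring.
  + apply: (critical_ideal_nontrivial_of_factors (k := 3) _ lt3i
      (F := LapFactor [:: -2; -2; -2; -2; -1; -1]
        [:: [:: 2; -1; 2]; [:: 0; 1; 0]; [:: 1; 0; 0]; [:: 1; 0; 2]; [:: 1; 0; 1]; [:: 1; 0; 1]]
        [:: [:: -1; -1; -2; 0; -1; -1]; [:: 0; -2; -1; -1; -1; -1]; [:: 0; 0; 1; -1; 0; 0]])).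
    by vm_compute.
- apply: (gamma_del_vertex_le (Fs := [::
    LapFactor [:: -1; -2; -2; -1; -1]
      [:: [:: 1; 0]; [:: 1; 1]; [:: 1; -1]; [:: 1; 0]; [:: 1; 0]]
      [:: [:: -1; -1; -1; -1; -1]; [:: 0; -1; 1; 0; 0]];
    LapFactor [:: -1; -2; -2; -1; -1]
      [:: [:: 1; 0]; [:: 1; 1]; [:: 1; -1]; [:: 1; 0]; [:: 1; 0]]
      [:: [:: -1; -1; -1; -1; -1]; [:: 0; -1; 1; 0; 0]];
    LapFactor [:: -2; -2; -1; -1; -1]
      [:: [:: 2; -1]; [:: 0; 1]; [:: 1; 0]; [:: 1; 0]; [:: 1; 0]]
      [:: [:: -1; -1; -1; -1; -1]; [:: 0; -2; -1; -1; -1]];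
    LapFactor [:: -2; -2; -1; -1; -1]
      [:: [:: 2; -1]; [:: 0; 1]; [:: 1; 0]; [:: 1; 0]; [:: 1; 0]]
      [:: [:: -1; -1; -1; -1; -1]; [:: 0; -2; -1; -1; -1]];
    LapFactor [:: 0; 0; 0; 0; -2]
      [:: [:: 0; 1]; [:: 0; 1]; [:: 1; 0]; [:: 1; 0]; [:: 1; 1]]
      [:: [:: -1; -1; 0; 0; -1]; [:: 0; 0; -1; -1; -1]];
    LapFactor [:: 0; 0; 0; 0; -2]
      [:: [:: 0; 1]; [:: 0; 1]; [:: 1; 0]; [:: 1; 0]; [:: 1; 1]]
      [:: [:: -1; -1; 0; 0; -1]; [:: 0; 0; -1; -1; -1]]])).
  by vm_compute.
Qed.

Lemma G4_in_Forb : in_Forb 2 G4.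
Proof.
have is_simple : simple_graph G4 by apply: simple_graph_of_check; vm_compute.
apply: (in_Forb_of_gamma is_simple).
- by apply: (connected_of_parent (proj1 is_simple) (r := ord0)
      (par := fun u => inZp (nth 0 [:: 0; 3; 3; 0; 3] u))); apply: all_ord_seqP; vm_compute.
- apply: gamma_eq => // [[|[|[|[|i]]]] // _ | i lt3i].
  + by apply: (@critical_ideal_trivial_of_trig _ _ 1 ord0
      (ords [:: 0]) (ords [:: 3])); vm_compute.
  + by apply: (@critical_ideal_trivial_of_trig _ _ 2 ord0
      (ords [:: 0; 1]) (ords [:: 3; 2])); vm_compute.
  + by apply: (@critical_ideal_trivial_of_trig _ _ 3 ord0
      (ords [:: 0; 1; 3]) (ords [:: 3; 2; 4])); vm_compute.
  + apply: (critical_ideal_nontrivial_of_factors (k := 3) _ lt3i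
      (F := LapFactor [:: -2; -1; -1; -2; -2]
        [:: [:: 2; -2; 1]; [:: 0; 1; 0]; [:: 0; 1; 0]; [:: 1; 0; 0]; [:: 0; 0; -1]]
        [:: [:: -1; -1; -1; -2; -1]; [:: 0; -1; -1; -1; 0]; [:: 0; 0; 0; 1; 2]])).
    by vm_compute.
- apply: (gamma_del_vertex_le (Fs := [::
    LapFactor [:: -1; -1; -2; -1]
      [:: [:: 1; 0]; [:: 1; 0]; [:: 1; 1]; [:: 0; 1]]
      [:: [:: -1; -1; -1; 0]; [:: 0; 0; -1; -1]];
    LapFactor [:: 0; 0; -2; 0]
      [:: [:: 0; 1]; [:: 0; 1]; [:: 1; 0]; [:: 0; 1]]
      [:: [:: -1; -1; -2; -1]; [:: 0; 0; -1; 0]];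
    LapFactor [:: 0; 0; -2; 0]
      [:: [:: 0; 1]; [:: 0; 1]; [:: 1; 0]; [:: 0; 1]]
      [:: [:: -1; -1; -2; -1]; [:: 0; 0; -1; 0]];
    LapFactor [:: -2; -1; -1; 0]
      [:: [:: 1; 0]; [:: 0; 1]; [:: 0; 1]; [:: 0; 0]]
      [:: [:: -2; 0; 0; 0]; [:: 0; -1; -1; 0]];
    LapFactor [:: -1; -1; -1; -2]
      [:: [:: 1; 0]; [:: 0; 1]; [:: 0; 1]; [:: 1; 1]]
      [:: [:: -1; 0; 0; -1]; [:: 0; -1; -1; -1]]])).
  by vm_compute.
Qed.

Lemma G5_in_Forb : in_Forb 2 G5.
Proof.
have is_simple : simple_graph G5 by apply: simple_graph_of_check; vm_compute.
apply: (in_Forb_of_gamma is_simple).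
- by apply: (connected_of_parent (proj1 is_simple) (r := ord0)
      (par := fun u => inZp (nth 0 [:: 0; 0; 1; 0; 3] u))); apply: all_ord_seqP; vm_compute.
- apply: gamma_eq => // [[|[|[|[|i]]]] // _ | i lt3i].
  + by apply: (@critical_ideal_trivial_of_trig _ _ 1 ord0
      (ords [:: 0]) (ords [:: 1])); vm_compute.
  + by apply: (@critical_ideal_trivial_of_trig _ _ 2 ord0
      (ords [:: 0; 1]) (ords [:: 1; 2])); vm_compute.
  + by apply: (@critical_ideal_trivial_of_trig _ _ 3 ord0
      (ords [:: 0; 1; 3]) (ords [:: 1; 2; 4])); vm_compute.
  + apply: (critical_ideal_nontrivial_of_factors (k := 3) _ lt3i
      (F := LapFactor [:: -2; -1; -2; -2; -1]
        [:: [:: 2; 1; 0]; [:: 1; 0; 0]; [:: 0; -1; 0]; [:: 1; 0; 1]; [:: 0; 0; 1]]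
        [:: [:: -1; -1; -1; -1; 0]; [:: 0; 1; 2; 1; 0]; [:: 0; 0; 0; -1; -1]])).
    by vm_compute.
- apply: (gamma_del_vertex_le (Fs := [::
    LapFactor [:: -1; -1; -2; -1]
      [:: [:: 1; 0]; [:: 1; 0]; [:: 1; 1]; [:: 0; 1]]
      [:: [:: -1; -1; -1; 0]; [:: 0; 0; -1; -1]];
    LapFactor [:: 0; 0; -2; 0]
      [:: [:: 0; 1]; [:: 0; 1]; [:: 1; 0]; [:: 0; 1]]
      [:: [:: -1; -1; -2; -1]; [:: 0; 0; -1; 0]];
    LapFactor [:: -1; -1; -2; -1]
      [:: [:: 1; 0]; [:: 1; 0]; [:: 1; 1]; [:: 0; 1]]
      [:: [:: -1; -1; -1; 0]; [:: 0; 0; -1; -1]];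
    LapFactor [:: -2; -1; -2; 0]
      [:: [:: 2; 1]; [:: 1; 0]; [:: 0; -1]; [:: 0; 0]]
      [:: [:: -1; -1; -1; 0]; [:: 0; 1; 2; 0]];
    LapFactor [:: -2; -1; -2; -1]
      [:: [:: 2; 1]; [:: 1; 0]; [:: 0; -1]; [:: 1; 0]]
      [:: [:: -1; -1; -1; -1]; [:: 0; 1; 2; 1]]])).
  by vm_compute.
Qed.

Theorem proposition4p1 :
  [/\ in_Forb 2 P4, in_Forb 2 K5_minus_S2, in_Forb 2 K6_minus_M2,
      in_Forb 2 G4 & in_Forb 2 G5].
Proof.
split; [exact: P4_in_Forb | exact: K5_minus_S2_in_Forb | exact: K6_minus_M2_in_Forb
       | exact: G4_in_Forb | exact: G5_in_Forb].
Qed.
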